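(* For every ring $R$ and every nonnegative integer $n$, the closure of $\mathcal{O}^n_0(R)$ in $R^R$ is contained in $\mathcal{D}^n(R)$.
   Context: Rings are commutative with unit. A derivation on $R$ is a map $d\colon R\to R$ with $d(x+y)=d(x)+d(y)$ and $d(xy)=d(x)y+d(y)x$. Inductively: $\mathcal{D}^0(R)=\{0\}$; for $n>0$, $D\in\mathcal{D}^n(R)$ if $D$ is additive and $D(xy)-D(x)y-D(y)x=B(x,y)$ for all $x,y\in R$, where $B$ in each variable separately is in $\mathcal{D}^{n-1}(R)$. A differential operator of degree at most $n$ on $R$ is an $R$-linear combination of finitely many maps $d_1\circ\cdots\circ d_k$, $d_i$ derivations on $R$, $k\le n$ (for $k=0$ the identity map). $\mathcal{O}^n_0(R)$ is the set of differential operators $D$ of degree at most $n$ with $D(1)=0$. $R^R$ carries the product topology with $R$ discrete. *)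

From HB Require Import structures.
From mathcomp Require Import all_boot all_order all_algebra.
From mathcomp Require Import all_classical all_reals all_analysis.
Set Implicit Arguments. Unset Strict Implicit. Unset Printing Implicit Defensive.
Import Order.TTheory GRing.Theory Num.Theory.
Local Open Scope ring_scope.

(* R : comPzRingType = commutative ring with unit (the zero ring allowed). *)

Definition additive_map (R : comPzRingType) (D : R -> R) : Prop :=
  forall x y, D (x + y) = D x + D y.

Definition is_derivation (R : comPzRingType) (d : R -> R) : Prop :=
  additive_map d /\ forall x y, d (x * y) = d x * y + d y * x.

Fixpoint Dn (R : comPzRingType) (n : nat) : (R -> R) -> Prop :=
  match n with
  | 0%N => fun D => forall x, D x = 0
  | m.+1 => fun D =>
      additive_map D /\
      let B := fun x y => D (x * y) - D x * y - D y * x in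
      (forall x, Dn m (B x)) /\ (forall y, Dn m (fun x => B x y))
  end.

Definition comp_list (R : comPzRingType) (ds : seq (R -> R)) : R -> R :=
  foldr (fun d f => d \o f) id ds.

Definition diff_op (R : comPzRingType) (n : nat) (D : R -> R) : Prop :=
  exists terms : seq (R * seq (R -> R)),
    (forall t, t \in terms -> (size t.2 <= n)%N /\
                              forall d, d \in t.2 -> is_derivation d) /\
    forall x, D x = \sum_(t <- terms) t.1 * comp_list t.2 x.

Definition O0 (R : comPzRingType) (n : nat) : set (R -> R) :=
  [set D | diff_op n D /\ D 1 = 0].

Definition RR (R : comPzRingType) := {ptws R -> discrete_topology R}.

From mathcomp Require Import all_boot all_order all_algebra.
From mathcomp Require Import all_classical all_reals all_analysis.
From mathcomp Require Import ring.
Import GRing.Theory.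

(* Each class D^n is an R-submodule of R^R, increasing in n, and composing a
   derivation d after an element E of D^m lands in D^(m+1), because the
   defect of d o E is d applied to the defect of E plus the two terms
   E x * d y and d x * E y.  Hence a composition of k >= 1 derivations lies
   in D^k and vanishes at 1, so in a differential operator with D 1 = 0 the
   identity terms cancel and D lies in D^n.  Finally, membership in D^n only
   ever tests finitely many values of D, so D^n is closed in the product
   topology. *)

Local Open Scope classical_set_scope.
Local Open Scope ring_scope.

Section DifferentialOperators.
Set Implicit Arguments. Unset Strict Implicit.
Context {R : comPzRingType}.
Implicit Types (D E : R -> R) (d : R -> R) (m n : nat).

Definition defect D x y := D (x * y) - D x * y - D y * x.

Lemma eq_Dn m D E : D =1 E -> Dn m D -> Dn m E.
Proof. by move=> /funext ->. Qed.

Lemma DnS m D :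
  Dn m.+1 D <-> additive_map D /\ forall x, Dn m (defect D x).
Proof.
split=> [[addD [dD _]] // | [addD dD]]; split=> //; split=> // y.
by apply: eq_Dn (dD y) => x; rewrite /defect [y * x]mulrC; ring.
Qed.

Lemma Dn_zero m : Dn m (fun _ : R => 0).
Proof.
elim: m => // m IH; apply/DnS; split=> [x y | x]; first by rewrite addr0.
by apply: eq_Dn IH => y; rewrite /defect; ring.
Qed.

Lemma Dn_add m D E : Dn m D -> Dn m E -> Dn m (fun x => D x + E x).
Proof.
elim: m D E => [D E D0 E0 x | m IH D E /DnS[addD dD] /DnS[addE dE]].
  by rewrite /= D0 E0 addr0.
apply/DnS; split=> [x y | x]; first by rewrite addD addE; ring.
by apply: eq_Dn (IH _ _ (dD x) (dE x)) => y; rewrite /defect; ring.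
Qed.

Lemma Dn_scale m (c : R) D : Dn m D -> Dn m (fun x => c * D x).
Proof.
elim: m D => [D D0 x | m IH D /DnS[addD dD]]; first by rewrite /= D0 mulr0.
apply/DnS; split=> [x y | x]; first by rewrite addD mulrDr.
by apply: eq_Dn (IH _ (dD x)) => y; rewrite /defect; ring.
Qed.

Lemma Dn_sum m (I : eqType) (r : seq I) (P : pred I) (F : I -> R -> R) :
  (forall i, i \in r -> P i -> Dn m (F i)) ->
  Dn m (fun x => \sum_(i <- r | P i) F i x).
Proof.
elim: r => [|i r IH] DnF.
  by apply: eq_Dn (Dn_zero m) => x; rewrite big_nil.
have {}IH := IH (fun j jr => DnF j (mem_behead (s := i :: r) jr)).
case Pi: (P i); last by apply: eq_Dn IH => x; rewrite big_cons Pi.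
by apply: eq_Dn (Dn_add (DnF i (mem_head i r) Pi) IH) => x; rewrite big_cons Pi.
Qed.

Lemma Dn_succ m D : Dn m D -> Dn m.+1 D.
Proof.
elim: m D => [D D0 | m IH D /DnS[addD dD]]; apply/DnS; split=> //.
- by move=> x y; rewrite !D0 addr0.
- by move=> x; apply: eq_Dn (Dn_zero 0) => y; rewrite /defect !D0; ring.
- by move=> x; apply: IH.
Qed.

Lemma Dn_leq m n D : (m <= n)%N -> Dn m D -> Dn n D.
Proof.
elim: n => [|n IH]; first by rewrite leqn0 => /eqP ->.
by rewrite leq_eqVlt ltnS => /orP[/eqP -> // | /IH DnD /DnD /Dn_succ].
Qed.

Lemma derivation0 d : is_derivation d -> d 0 = 0.
Proof.
by case=> addd _; apply: (addIr (d 0)); rewrite -addd !add0r.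
Qed.

Lemma derivation1 d : is_derivation d -> d 1 = 0.
Proof.
case=> _ muld; have := muld 1 1; rewrite !mulr1 => d1.
by apply: (addIr (d 1)); rewrite add0r -d1.
Qed.

Lemma derivation_Dn1 d : is_derivation d -> Dn 1 d.
Proof. by case=> addd muld; apply/DnS; split=> // x y; rewrite /defect muld; ring. Qed.

Lemma defect_comp d E x y : is_derivation d ->
  defect (d \o E) x y = d (defect E x y) + E x * d y + d x * E y.
Proof.
case=> addd muld; have EM : E (x * y) = defect E x y + E x * y + E y * x.
  by rewrite /defect; ring.
move: (defect E x y) EM => b EM.
by rewrite /defect /= EM !addd !muld; ring.
Qed.

Lemma Dn_comp m d E : is_derivation d -> Dn m E -> Dn m.+1 (d \o E).
Proof.
move=> derd; have [addd _] := derd.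
elim: m E => [E E0 | m IH E /[dup] DnE /DnS[addE dE]].
  by apply: eq_Dn (Dn_zero 1) => x; rewrite /= E0 (derivation0 derd).
apply/DnS; split=> [x y | x]; first by rewrite /= addE addd.
apply: eq_Dn (fun y => esym (defect_comp E x y derd)) _.
apply: Dn_add; [apply: Dn_add | exact: Dn_scale].
- exact: IH.
- by apply/Dn_scale/(Dn_leq _ (derivation_Dn1 derd)).
Qed.

Lemma Dn_comp_list ds : ds != [::] -> {in ds, forall d, is_derivation d} ->
  Dn (size ds) (comp_list ds).
Proof.
elim: ds => // d ds IH _ derds.
have derd := derds d (mem_head d ds).
have [-> | ds_nz] := eqVneq ds [::]; first exact: derivation_Dn1.
by apply/(Dn_comp derd)/(IH ds_nz) => e eds; apply/derds/mem_behead.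
Qed.

Lemma comp_list1 ds : ds != [::] -> {in ds, forall d, is_derivation d} ->
  comp_list ds 1 = 0.
Proof.
elim: ds => // d ds IH _ derds.
have derd := derds d (mem_head d ds).
have [-> | ds_nz] := eqVneq ds [::]; first exact: derivation1.
change (d (comp_list ds 1) = 0).
by rewrite IH ?(derivation0 derd) // => e eds; apply/derds/mem_behead.
Qed.

Lemma O0_sub_Dn n : @O0 R n `<=` @Dn R n.
Proof.
move=> D [[terms [termsP Dterms]] D1].
pose S x := \sum_(t <- terms | t.2 != [::]) t.1 * comp_list t.2 x.
pose c := \sum_(t <- terms | t.2 == [::]) t.1.
have DSc x : D x = S x + c * x.
  rewrite Dterms (bigID (fun t => t.2 != [::])) /= mulr_suml; congr (_ + _).
  by apply: eq_big => [t | t]; rewrite ?negbK // => /eqP ->.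
have S1 : S 1 = 0.
  rewrite /S big1_seq // => t /andP[t2_nz /termsP[_ dert]].
  by rewrite comp_list1 ?mulr0.
have c0 : c = 0 by move: D1; rewrite DSc S1 add0r mulr1.
apply: eq_Dn (fun x => esym (DSc x)) _; rewrite c0.
apply: eq_Dn (Dn_sum _) => [x | t /termsP[size_t dert] t2_nz].
  by rewrite /S mul0r addr0.
by apply/Dn_scale/(Dn_leq size_t)/Dn_comp_list.
Qed.

Lemma Dn_finite_agreement n D :
  (forall s : seq R, exists2 E, Dn n E & {in s, E =1 D}) -> Dn n D.
Proof.
elim: n D => [|n IH] D approxD.
  by move=> x; have [E E0 ED] := approxD [:: x]; rewrite -ED ?mem_head.
apply/DnS; split=> [x y | x].
  have [E /DnS[addE _] ED] := approxD [:: x; y; x + y].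
  by rewrite -!ED ?addE // !inE eqxx ?orbT.
apply: IH => s; have [E /DnS[_ dE] ED] := approxD (x :: s ++ map ( *%R x) s).
exists (defect E x) => // y sy.
by rewrite /defect !ED // in_cons ?eqxx // mem_cat ?sy ?map_f ?orbT.
Qed.

Lemma nbhs_agree (D : RR R) (s : seq R) :
  nbhs D [set E : RR R | {in s, E =1 D}].
Proof.
elim: s => [|z s IH]; first by apply: filterS filterT => E _ y.
have nbhs_z : nbhs D [set E : RR R | E z = D z].
  apply: (@proj_continuous R (fun=> discrete_topology R) z D [set D z]).
  by rewrite nbhs_principalE; apply/principal_filterP.
by apply: filterS2 nbhs_z IH => E Ez Es y; rewrite inE => /orP[/eqP -> | /Es].
Qed.

End DifferentialOperators.

Theorem lemma2p2 (R : comPzRingType) (n : nat) :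
  (@closure (RR R) (@O0 R n : set (RR R))) `<=` (@Dn R n : set (R -> R)).
Proof.
move=> D clD; apply: Dn_finite_agreement => s.
have [F [inO0 FD]] := clD _ (nbhs_agree D s).
by exists F; [exact: O0_sub_Dn | exact: FD].
Qed.
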